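(* The function $e(\lambda)$ is strictly increasing on $(\lambda^*,\infty)$; in fact $e'(\lambda)>0$ for all $\lambda>\lambda^*$.
   Context: Standing setup. Let $\gamma>0$; let $a_1,\dots,a_p>0$ with weights $\omega_i>0$, $\sum_i\omega_i=1$, and $b_1,\dots,b_n>0$ with weights $\pi_j>0$, $\sum_j\pi_j=1$. Let $\mu$ be the limiting spectral distribution of $\mathbf{N}\mathbf{N}^T$ where $\mathbf{N}=\mathbf{A}^{1/2}\mathbf{G}\mathbf{B}^{1/2}$ is $k\times l$, $\mathbf{G}$ has iid mean-zero entries of variance $1/l$, $k/l\to\gamma$, and the spectral distributions of $\mathbf{A},\mathbf{B}$ converge to $\nu=\sum_i\omega_i\delta_{a_i}$ and $\underline{\nu}=\sum_j\pi_j\delta_{b_j}$. $\mu$ is a compactly supported probability measure on $[0,\infty)$; $\lambda^*>0$ is the right endpoint of its support, and $s(\lambda)=\int\frac{d\mu(t)}{t-\lambda}$ for $\lambda>\lambda^*$. Define $G(e)=\sum_{j=1}^n\frac{b_j\pi_j}{1+\gamma b_j e}$ and $F(\lambda,e)=e-\sum_{i=1}^p\frac{a_i\omega_i}{a_iG(e)-\lambda}$. It is known (master equations) that there is a smooth real function $e(\lambda)$ on $(\lambda^*,\infty)$, never equal to a pole $-1/(\gamma b_j)$ of $G$ and with $a_iG(e(\lambda))\ne\lambda$, satisfying $s(\lambda)=\sum_{i=1}^p\frac{\omega_i}{a_iG(e(\lambda))-\lambda}$ and $F(\lambda,e(\lambda))=0$. *)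

From HB Require Import structures.
From mathcomp Require Import all_boot all_order all_algebra.
From mathcomp Require Import all_classical all_reals all_analysis.
Set Implicit Arguments. Unset Strict Implicit. Unset Printing Implicit Defensive.
Import Order.TTheory GRing.Theory Num.Theory.
Local Open Scope ring_scope.

Definition Gfun (R : realType) (n : nat) (gamma : R) (b pi : 'I_n -> R) (e : R) : R :=
  \sum_(j < n) b j * pi j / (1 + gamma * b j * e).

Definition Ffun (R : realType) (p n : nat) (gamma : R) (a omega : 'I_p -> R)
  (b pi : 'I_n -> R) (lam e : R) : R :=
  e - \sum_(i < p) a i * omega i / (a i * Gfun gamma b pi e - lam).

Definition stieltjes (R : realType) (mu : probability R R) (lam : R) : R :=
  Rintegral mu setT (fun t => (t - lam)^-1).

Definition right_endpoint_of_support (R : realType) (mu : probability R R) (lstar : R) : Prop :=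
  (mu `]lstar, +oo[%classic = 0)%E /\
  (forall eps : R, 0 < eps -> (0 < mu `]((lstar - eps)%R), +oo[%classic)%E).

From HB Require Import structures.
From mathcomp Require Import all_boot all_order all_algebra.
From mathcomp Require Import all_classical all_reals all_analysis.
From mathcomp Require Import measurable_realfun.
From mathcomp Require Import ring lra.
Set Implicit Arguments.
Unset Strict Implicit.
Unset Printing Implicit Defensive.
Import Order.TTheory GRing.Theory Num.Theory.
Import numFieldNormedType.Exports.
Local Open Scope ring_scope.
Local Open Scope classical_set_scope.

(* Eliminating [s(lambda)] between the two master equations gives
   [\sum_j pi_j / (1 + gamma b_j e(lambda)) = 1 - gamma (1 + lambda s(lambda))].
   The right side is nonincreasing because [lambda s(lambda)] is nondecreasing
   for a measure carried by [[0, lambda*]], while the left side is strictly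
   decreasing in [e] as long as no denominator changes sign, which continuity
   and the absence of poles guarantee; hence [e] is nondecreasing.  If
   [e'(lambda)] vanished, differentiating [F(lambda, e(lambda)) = 0] would give
   [0 = \sum_i a_i omega_i / (a_i G(e) - lambda)^2 > 0]; so [e' <> 0], and a
   nondecreasing function with nonvanishing derivative has [e' > 0]. *)

Lemma sumr_ord_gt0 (R : numDomainType) (n : nat) (F : 'I_n -> R) :
  (0 < n)%N -> (forall i, 0 < F i) -> 0 < \sum_(i < n) F i.
Proof.
case: n F => // n F _ F_gt0; rewrite (bigD1 ord0) //= ltr_pwDl //.
by apply: sumr_ge0 => i _; exact: ltW.
Qed.

Lemma gt0_of_sumr_eq1 (R : numDomainType) (n : nat) (w : 'I_n -> R) :
  \sum_(i < n) w i = 1 -> (0 < n)%N.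
Proof. by case: n w => // w; rewrite big_ord0 => /eqP; rewrite eq_sym oner_eq0. Qed.

Lemma sum_div_1DM_decreasing (R : realFieldType) (n : nat) (c k : 'I_n -> R) (u v : R) :
  (0 < n)%N -> (forall j, 0 < c j) -> (forall j, 0 < k j) ->
  (forall j, 0 < (1 + k j * u) * (1 + k j * v)) -> v < u ->
  \sum_(j < n) c j / (1 + k j * u) < \sum_(j < n) c j / (1 + k j * v).
Proof.
move=> n_gt0 c_gt0 k_gt0 uv_gt0 vu; rewrite -subr_gt0 -sumrB; apply: sumr_ord_gt0 => // j.
have [u_neq0 v_neq0] : 1 + k j * u != 0 /\ 1 + k j * v != 0.
  by split; apply/negP => /eqP h; move: (uv_gt0 j); rewrite h (mul0r, mulr0) ltxx.
have -> : c j / (1 + k j * v) - c j / (1 + k j * u)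
    = c j * k j * (u - v) / ((1 + k j * u) * (1 + k j * v)) by field; rewrite u_neq0 v_neq0.
by rewrite divr_gt0 // !mulr_gt0 // subr_gt0.
Qed.

Lemma is_derive_sum_div (R : realType) (n : nat) (x : R) (c : 'I_n -> R)
    (f : 'I_n -> R -> R) (df : 'I_n -> R) :
  (forall j, f j x != 0) -> (forall j, is_derive x 1 (f j) (df j)) ->
  is_derive x 1 (fun t => \sum_(j < n) c j / f j t)
    (- \sum_(j < n) c j * df j / f j x ^+ 2).
Proof.
move=> f_neq0 f_derive.
have term_derive j : is_derive x 1 (fun t => c j / f j t) (- (c j * df j / f j x ^+ 2)).
  by apply: is_derive_eq; rewrite /GRing.scale /=; field; exact: f_neq0.
have -> : (fun t => \sum_(j < n) c j / f j t) = \sum_(j < n) (fun t => c j / f j t).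
  by apply/funext => t; rewrite fct_sumE.
by rewrite -sumrN; exact: is_derive_sum.
Qed.

Lemma mulr_gt0_continuous_neq0 (R : realType) (c : R -> R) (x y : R) : x <= y ->
  {within `[x, y], continuous c} -> {in `[x, y]%R, forall t, c t != 0} -> 0 < c x * c y.
Proof.
move=> x_le_y c_cont c_neq0; rewrite ltNge; apply/negP => cxy_le0.
have cx_neq0 : c x != 0 by apply: c_neq0; rewrite in_itv /= lexx.
have cy_neq0 : c y != 0 by apply: c_neq0; rewrite in_itv /= lexx andbT.
have : Num.min (c x) (c y) <= 0 <= Num.max (c x) (c y).
  rewrite ge_min le_max; move: cx_neq0; rewrite neq_lt => /orP[cx_lt0|cx_gt0].
    by rewrite (ltW cx_lt0) /=; apply/orP; right; nra.
  by rewrite (ltW cx_gt0) andbT; apply/orP; right; nra.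
move=> /(IVT x_le_y c_cont)[t t_in ct0].
by move: (c_neq0 t t_in); rewrite ct0 eqxx.
Qed.

(* Rolle forbids flat pieces; monotonicity then gives the sign of the derivative. *)
Lemma nondecreasing_derive1_neq0_increasing (R : realType) (f : R -> R) (l : R) :
  (forall x, l < x -> derivable f x 1) ->
  (forall x y, l < x -> x < y -> f x <= f y) ->
  (forall x, l < x -> derive1 f x != 0) ->
  (forall x y, l < x -> x < y -> f x < f y) /\ (forall x, l < x -> 0 < derive1 f x).
Proof.
move=> f_der f_nondecr f'_neq0.
have f_incr x y : l < x -> x < y -> f x < f y.
  move=> l_lt_x x_lt_y; rewrite lt_neqAle f_nondecr // andbT; apply/eqP => fxy.
  have f_cont : {within `[x, y], continuous f}.
    apply: derivable_within_continuous => t; rewrite in_itv /= => /andP[xt _].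
    exact/f_der/(lt_le_trans l_lt_x).
  have f_der_in t : t \in `]x, y[%R -> derivable f t 1.
    by rewrite in_itv /= => /andP[xt _]; exact/f_der/(lt_trans l_lt_x).
  have [t] := Rolle x_lt_y f_der_in f_cont fxy.
  rewrite in_itv /= => /andP[xt _] [_ f't0].
  by move: (f'_neq0 t (lt_trans l_lt_x xt)); rewrite derive1E f't0 eqxx.
split=> // x l_lt_x; rewrite lt_neqAle eq_sym f'_neq0 //=.
apply: (@incr_derive1_ge0_itvy _ _ false l).
- by move=> t; rewrite inE /= in_itv /= andbT; exact: f_der.
- by move=> u v; rewrite !in_itv /= !andbT => lu _ uv; exact: f_incr.
- by rewrite in_itv /= andbT.
Qed.

Section StieltjesTransform.

(* [(l - l)^-1 = 0]; off the point [l] the function is continuous. *)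
Lemma measurable_fun_inv_subr (R : realType) (l : R) :
  measurable_fun setT (fun t : R => (t - l)^-1).
Proof.
rewrite -(setUv [set l]); apply/measurable_funU; [by []|exact: measurableC|split].
  exact: measurable_fun_set1.
apply: open_continuous_measurable_fun.
  exact/closed_openC/accessible_closed_set1/hausdorff_accessible/Rhausdorff.
move=> t; rewrite inE /= => /eqP t_neq_l.
by apply: cvgV; [rewrite subr_eq0 | apply: cvgB; [exact: cvg_id | exact: cvg_cst]].
Qed.

Variables (R : realType) (mu : probability R R) (lstar : R).
Hypothesis mu_gt_lstar : mu `]lstar, +oo[ = 0%E.

Lemma integrable_inv_subr (l : R) : lstar < l ->
  mu.-integrable setT (EFin \o (fun t : R => (t - l)^-1)).
Proof.
move=> lstar_lt_l.
have /measurable_EFinP mf := measurable_fun_inv_subr l.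
apply/(negligible_integrable _ measurableT mf mu_gt_lstar) => //.
apply: measurable_bounded_integrable => //.
- exact: measurableD.
- by apply: (le_lt_trans (probability_le1 _ _)); [exact: measurableD | exact: ltry].
- exact: measurable_funS (measurable_fun_inv_subr l).
rewrite /bounded_near; near=> M => t [_ /=]; rewrite in_itv /= andbT => /negP; rewrite -leNgt => t_le.
apply: (@le_trans _ _ (l - lstar)^-1).
  rewrite normfV -normrN opprB ger0_norm; last by rewrite subr_ge0 (le_trans t_le) // ltW.
  by rewrite lef_pV2 ?posrE ?subr_gt0 //; [lra | exact: le_lt_trans lstar_lt_l].
by near: M; apply: nbhs_pinfty_ge; exact: num_real.
Unshelve. all: by end_near.
Qed.

Lemma mulr_stieltjes_le (x y : R) : mu `]-oo, 0[ = 0%E -> lstar < x -> x <= y ->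
  x * stieltjes mu x <= y * stieltjes mu y.
Proof.
move=> mu_lt0 lstar_lt_x x_le_y.
have lstar_lt_y := lt_le_trans lstar_lt_x x_le_y.
pose N : set R := `]-oo, 0[ `|` `]lstar, +oo[.
have mN : measurable N by apply: measurableU.
have muN : mu N = 0%E by rewrite measureU0.
have integrable_scaled l : lstar < l ->
    mu.-integrable setT (EFin \o (fun t : R => l * (t - l)^-1)).
  move=> /integrable_inv_subr /(integrableZl measurableT l).
  by apply: eq_integrable => // t _ /=; rewrite EFinM.
rewrite /stieltjes -!RintegralZl //; try exact: integrable_inv_subr.
rewrite /Rintegral (negligible_integral mN _ (integrable_scaled _ lstar_lt_x)) //.
rewrite (negligible_integral mN _ (integrable_scaled _ lstar_lt_y)) //.
have mD : measurable (setT `\` N) by exact: measurableD.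
apply: le_Rintegral => //.
- exact: integrableS (integrable_scaled _ lstar_lt_x).
- exact: integrableS (integrable_scaled _ lstar_lt_y).
move=> t [_ /=] /not_orP[]; rewrite /= !in_itv /= andbT => /negP + /negP.
rewrite -!leNgt => t_ge0 t_le.
(* [l / (t - l) = -1 - t / (l - t)] is nondecreasing in [l > t] when [t >= 0]. *)
have inv_subr_form l : t < l -> l * (t - l)^-1 = -1 - t / (l - t).
  move=> t_lt_l; have tl : t - l != 0 by rewrite subr_eq0 lt_eqF.
  have lt : l - t != 0 by rewrite subr_eq0 gt_eqF.
  by field; rewrite tl lt.
rewrite !inv_subr_form; try exact: le_lt_trans t_le _.
rewrite lerD2l lerN2 ler_wpM2l // lef_pV2 ?posrE ?subr_gt0; try lra.
all: exact: le_lt_trans t_le _.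
Qed.

End StieltjesTransform.

Section MasterEquations.
Variables (R : realType) (gamma : R) (p n : nat).
Variables (a omega : 'I_p -> R) (b pi : 'I_n -> R).
Local Notation G := (Gfun gamma b pi).

Lemma Gfun_mulr (e : R) : \sum_(j < n) pi j = 1 ->
  (forall j, 1 + gamma * b j * e != 0) ->
  gamma * (G e * e) = 1 - \sum_(j < n) pi j / (1 + gamma * b j * e).
Proof.
move=> pi_sum1 poles; rewrite /Gfun mulr_suml mulr_sumr -[X in _ = X - _]pi_sum1 -sumrB.
by apply: eq_bigr => j _; move: (poles j) => ?; field.
Qed.

Lemma master_Gfun_mulr (x e : R) : \sum_(i < p) omega i = 1 ->
  (forall i, a i * G e != x) -> Ffun gamma a omega b pi x e = 0 ->
  G e * e = 1 + x * \sum_(i < p) omega i / (a i * G e - x).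
Proof.
move=> omega_sum1 aG_neq /subr0_eq {2}->.
rewrite mulr_sumr mulr_sumr -omega_sum1 -big_split; apply: eq_bigr => i _ /=.
have : a i * G e - x != 0 by rewrite subr_eq0.
by move=> ?; field.
Qed.

Lemma derive1_master_neq0 (e : R -> R) (x : R) :
  (0 < p)%N -> (forall i, 0 < a i) -> (forall i, 0 < omega i) ->
  (forall j, 1 + gamma * b j * e x != 0) -> (forall i, a i * G (e x) != x) ->
  derivable e x 1 -> (\forall t \near x, Ffun gamma a omega b pi t (e t) = 0) ->
  derive1 e x != 0.
Proof.
move=> p_gt0 a_gt0 omega_gt0 poles aG_neq e_der master; apply/eqP => e'x0.
have e_derive : is_derive x 1 e 0 by rewrite -e'x0 derive1E; exact: derivableP.
(* With [e'(x) = 0], [G(e t)] is stationary at [x], so the right side of the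
   master equation has derivative [\sum_i a_i omega_i / (a_i G(e x) - x)^2 > 0]. *)
have G_derive : is_derive x 1 (fun t => G (e t)) 0.
  rewrite /Gfun; apply: is_derive_eq.
    apply: (@is_derive_sum_div _ _ _ _ (fun j t => 1 + gamma * b j * e t) (fun=> 0)) => //.
    by move=> j; apply: is_derive_eq; rewrite scaler0 mulr0.
  by rewrite /= big1 ?oppr0 // => j _; rewrite mulr0 mul0r.
pose psi t := \sum_(i < p) a i * omega i / (a i * G (e t) - t).
have psi_derive : is_derive x 1 psi (\sum_(i < p) a i * omega i / (a i * G (e x) - x) ^+ 2).
  apply: is_derive_eq.
    apply: (@is_derive_sum_div _ _ _ _ (fun i t => a i * G (e t) - t) (fun=> -1)).
      by move=> i; rewrite subr_eq0.
    by move=> i; apply: is_derive_eq; rewrite scaler0 add0r.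
  by rewrite -sumrN; apply: eq_bigr => i _; rewrite mulrN1 mulNr opprK.
have psi_derive0 : is_derive x 1 psi 0.
  apply: near_eq_is_derive e_derive; apply: filterS master => t.
  by move=> /eqP; rewrite subr_eq0 => /eqP.
have [_ psi'x] := psi_derive; have [_ psi'x0] := psi_derive0.
move: psi'x; rewrite psi'x0 => /esym/eqP; rewrite gt_eqF // sumr_ord_gt0 // => i.
by apply: divr_gt0; [exact: mulr_gt0|rewrite exprn_even_gt0 //= subr_eq0].
Qed.

End MasterEquations.

Theorem proposition3p7 (R : realType) (gamma : R) (p n : nat)
  (a omega : 'I_p -> R) (b pi : 'I_n -> R)
  (mu : probability R R) (lstar : R) (e : R -> R) :
  0 < gamma ->
  (forall i, 0 < a i) -> (forall i, 0 < omega i) -> \sum_(i < p) omega i = 1 ->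
  (forall j, 0 < b j) -> (forall j, 0 < pi j) -> \sum_(j < n) pi j = 1 ->
  (* mu is a compactly supported probability measure on [0, +oo) *)
  mu (`]-oo, 0[%classic : set R) = 0%E ->
  (exists M : R, mu (`]M, +oo[%classic : set R) = 0%E) ->
  right_endpoint_of_support mu lstar -> 0 < lstar ->
  (* e is smooth on (lstar, +oo) *)
  (forall (k : nat) (x : R), lstar < x -> derivable (derive1n k e) x 1) ->
  (forall x, lstar < x -> forall j, 1 + gamma * b j * e x != 0) ->
  (forall x, lstar < x -> forall i, a i * Gfun gamma b pi (e x) != x) ->
  (* master equations *)
  (forall x, lstar < x ->
     stieltjes mu x = \sum_(i < p) omega i / (a i * Gfun gamma b pi (e x) - x)) ->
  (forall x, lstar < x -> Ffun gamma a omega b pi x (e x) = 0) ->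
  (forall x y, lstar < x -> x < y -> e x < e y) /\
  (forall x, lstar < x -> 0 < derive1 e x).
Proof.
move=> gamma_gt0 a_gt0 omega_gt0 omega_sum1 b_gt0 pi_gt0 pi_sum1 mu_lt0 _ [mu_gt_lstar _] _
  e_smooth poles aG_neq stieltjes_eq master.
have e_der x : lstar < x -> derivable e x 1 := e_smooth 0%N x.
have pi_sum_eq x : lstar < x ->
    \sum_(j < n) pi j / (1 + gamma * b j * e x) = 1 - gamma * (1 + x * stieltjes mu x).
  move=> l_lt_x; rewrite stieltjes_eq //.
  rewrite -(master_Gfun_mulr omega_sum1 (aG_neq x l_lt_x) (master x l_lt_x)).
  by rewrite (Gfun_mulr pi_sum1 (poles x l_lt_x)) opprB addrC subrK.
apply: (nondecreasing_derive1_neq0_increasing e_der) => [x y l_lt_x x_lt_y|x l_lt_x].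
  rewrite leNgt; apply/negP => ey_lt_ex.
  have poles_same_sign j : 0 < (1 + gamma * b j * e x) * (1 + gamma * b j * e y).
    apply: (@mulr_gt0_continuous_neq0 _ (fun t => 1 + gamma * b j * e t)) (ltW x_lt_y) _ _.
      apply: derivable_within_continuous => t; rewrite in_itv /= => /andP[xt _].
      apply: derivableD; [exact: derivable_cst|apply: derivableM; [exact: derivable_cst|]].
      exact/e_der/(lt_le_trans l_lt_x).
    by move=> t; rewrite in_itv /= => /andP[xt _]; apply/poles/(lt_le_trans l_lt_x).
  have := sum_div_1DM_decreasing (k := fun j => gamma * b j) (gt0_of_sumr_eq1 pi_sum1)
    pi_gt0 (fun j => mulr_gt0 gamma_gt0 (b_gt0 j)) poles_same_sign ey_lt_ex.
  have := mulr_stieltjes_le mu_gt_lstar mu_lt0 l_lt_x (ltW x_lt_y).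
  move=> /(ler_wpM2l (ltW gamma_gt0)); rewrite !pi_sum_eq //; [lra|exact: lt_trans x_lt_y].
apply: (derive1_master_neq0 (gt0_of_sumr_eq1 omega_sum1) a_gt0 omega_gt0
  (poles x l_lt_x) (aG_neq x l_lt_x) (e_der x l_lt_x)).
near=> t; apply: (master t); near: t; exact: lt_nbhsr.
Unshelve. all: by end_near.
Qed.
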